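(* Let $\Gamma=(V,E)$ be a finite simplicial graph such that $A_\Gamma$ has non-trivial centre. Let $S\subseteq V$ be the set of social vertices of $\Gamma$, $k=|S|$ (so $k\ge 1$), and $\Delta=\Gamma\setminus S$, so that $\Gamma$ is the join of $S$ and $\Delta$. Then the subgroup $\mathcal{L}$ of $\mathrm{Aut}(A_\Gamma)$ generated by all lateral transvections $\tau_{sa}$ ($s\in S$, $a\in\Delta$) is isomorphic to $\mathbb{Z}^{k|\Delta|}$.
   Context: For a finite simplicial graph $\Gamma=(V,E)$, $A_\Gamma=\langle v\in V\mid [v,w]=1 \text{ for }(v,w)\in E\rangle$. A vertex $s$ is social if it is adjacent to every other vertex of $\Gamma$. The join of two graphs is their disjoint union together with all edges between a vertex of the first and a vertex of the second. For $s\in S$ and $a\in\Delta$ (vertices of $\Delta$), the lateral transvection $\tau_{sa}\in\mathrm{Aut}(A_\Gamma)$ is the automorphism sending $a\mapsto as$ and fixing all other generators $v\in V$. Here $|\Delta|$ denotes the number of vertices of $\Delta$. *)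

From mathcomp Require Import all_boot all_algebra.
Set Implicit Arguments. Unset Strict Implicit. Unset Printing Implicit Defensive.

Record group := Group {
  gcar :> Type;
  gmul : gcar -> gcar -> gcar;
  gone : gcar;
  ginv : gcar -> gcar;
  gmulA : forall x y z, gmul x (gmul y z) = gmul (gmul x y) z;
  gmul1l : forall x, gmul gone x = x;
  gmulVl : forall x, gmul (ginv x) x = gone
}.

Definition is_hom (G H : group) (f : G -> H) : Prop :=
  forall x y, f (gmul x y) = gmul (f x) (f y).

Definition is_aut (G : group) (f : G -> G) : Prop := is_hom f /\ bijective f.

Definition simple_graph (V : finType) (E : rel V) : Prop :=
  symmetric E /\ irreflexive E.

(* (G, iota) is the right-angled Artin group A_Gamma, defined by its
   universal property (the presentation <V | [v,w]=1 for (v,w) in E>). *)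
Definition is_raag (V : finType) (E : rel V) (G : group) (iota : V -> G) : Prop :=
  (forall x y, E x y -> gmul (iota x) (iota y) = gmul (iota y) (iota x)) /\
  forall (H : group) (f : V -> H),
    (forall x y, E x y -> gmul (f x) (f y) = gmul (f y) (f x)) ->
    exists phi : G -> H,
      [/\ is_hom phi, (forall v, phi (iota v) = f v) &
          (forall psi : G -> H, is_hom psi -> (forall v, psi (iota v) = f v) ->
             forall g, psi g = phi g)].

Definition social (V : finType) (E : rel V) (s : V) : bool :=
  [forall v, (v != s) ==> E s v].

Definition social_set (V : finType) (E : rel V) : {set V} :=
  [set s | social E s].

Definition nontrivial_centre (G : group) : Prop :=
  exists z : G, z <> gone G /\ forall g : G, gmul z g = gmul g z.

Definition lateral_transvection (V : finType) (G : group) (iota : V -> G)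
    (s a : V) (t : G -> G) : Prop :=
  [/\ is_aut t, t (iota a) = gmul (iota a) (iota s) &
      forall v, v != a -> t (iota v) = iota v].

Definition is_lat_gen (V : finType) (E : rel V) (G : group) (iota : V -> G)
    (t : G -> G) : Prop :=
  exists s a, [/\ s \in social_set E, a \notin social_set E &
                  lateral_transvection iota s a t].

Inductive in_lat_subgroup (V : finType) (E : rel V) (G : group) (iota : V -> G)
  : (G -> G) -> Prop :=
| lat_id : in_lat_subgroup E iota id
| lat_gen : forall f t, in_lat_subgroup E iota f -> is_lat_gen E iota t ->
    in_lat_subgroup E iota (t \o f)
| lat_geninv : forall f t u, in_lat_subgroup E iota f -> is_lat_gen E iota t ->
    cancel t u -> cancel u t ->
    in_lat_subgroup E iota (u \o f).

(* Social generators are central.  Hence for every integer matrix c indexed by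
   S x Delta the assignment s |-> s, a |-> a * prod_s s^(c s a) respects the
   relations of A_Gamma and extends to an endomorphism T_c, with T_0 = id and
   T_c o T_d = T_(c+d); in particular every T_c is an automorphism.  The lateral
   transvection tau_(s,a) is T_c for the unit matrix at (s, a), so the group L it
   generates is exactly {T_c}, and c |-> T_c is an isomorphism Z^(S x Delta) ~ L
   whose inverse reads c off the abelianisation A_Gamma -> Z^V. *)

From Pilot Require Import Defs.
From mathcomp Require Import all_boot all_algebra zify.
From Stdlib Require Import FunctionalExtensionality.
Import GRing.Theory.

Set Implicit Arguments.
Unset Strict Implicit.
Unset Printing Implicit Defensive.

Local Open Scope ring_scope.

Section GroupTheory.
Variable G : group.
Implicit Types x y : G.

Lemma gmulI x : injective (gmul x).
Proof. by move=> y z Hyz; rewrite -(gmul1l y) -(gmul1l z) -(gmulVl x) -!gmulA Hyz. Qed.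

Lemma gmulg1 x : gmul x (gone G) = x.
Proof. by apply: (@gmulI (ginv x)); rewrite gmulA gmulVl gmul1l. Qed.

Lemma gmulgV x : gmul x (ginv x) = gone G.
Proof. by apply: (@gmulI (ginv x)); rewrite gmulA gmulVl gmul1l gmulg1. Qed.

Lemma ginv_unique x y : gmul x y = gone G -> ginv x = y.
Proof. by move=> Hxy; apply: (@gmulI x); rewrite Hxy gmulgV. Qed.

Lemma ginvM x y : ginv (gmul x y) = gmul (ginv y) (ginv x).
Proof. by apply: ginv_unique; rewrite -gmulA (gmulA y) gmulgV gmul1l gmulgV. Qed.

Lemma commuteV x y : gmul x y = gmul y x -> gmul x (ginv y) = gmul (ginv y) x.
Proof.
move=> Hxy; apply: (@gmulI y).
by rewrite gmulA -Hxy -gmulA gmulgV gmulg1 gmulA gmulgV gmul1l.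
Qed.

Definition central x := forall y, gmul x y = gmul y x.

Lemma central1 : central (gone G).
Proof. by move=> y; rewrite gmul1l gmulg1. Qed.

Lemma centralM x y : central x -> central y -> central (gmul x y).
Proof. by move=> Hx Hy z; rewrite -gmulA Hy gmulA Hx -gmulA. Qed.

Lemma centralV x : central x -> central (ginv x).
Proof. by move=> Hx y; rewrite -commuteV. Qed.

Lemma commute_mul_central x y a b : central a -> central b ->
  gmul x y = gmul y x -> gmul (gmul x a) (gmul y b) = gmul (gmul y b) (gmul x a).
Proof.
move=> Ha Hb Hxy.
have -> : gmul (gmul x a) (gmul y b) = gmul (gmul x y) (gmul a b).
  by rewrite -gmulA (Ha (gmul y b)) -gmulA gmulA (Hb a).
have -> : gmul (gmul y b) (gmul x a) = gmul (gmul y x) (gmul a b).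
  by rewrite -gmulA (Hb (gmul x a)) -gmulA gmulA.
by rewrite Hxy.
Qed.

Definition gexpn x n := iter n (gmul x) (gone G).

Definition gexpz x (z : int) :=
  match z with Posz n => gexpn x n | Negz n => ginv (gexpn x n.+1) end.

Lemma gexpnS x n : gexpn x n.+1 = gmul x (gexpn x n).
Proof. by []. Qed.

Lemma gexpnD x m n : gexpn x (m + n) = gmul (gexpn x m) (gexpn x n).
Proof.
elim: m => [|m IH]; first exact/esym/gmul1l.
by rewrite addSn !gexpnS IH gmulA.
Qed.

Lemma gexpn_comm x m n : gmul (gexpn x m) (gexpn x n) = gmul (gexpn x n) (gexpn x m).
Proof. by rewrite -!gexpnD addnC. Qed.

Lemma gexpz_subn x (m n : nat) :
  gexpz x (m%:Z - n%:Z) = gmul (gexpn x m) (ginv (gexpn x n)).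
Proof.
have [le_nm | lt_mn] := leqP n m.
  by rewrite subzn //= -{2}(subnK le_nm) gexpnD -gmulA gmulgV gmulg1.
have -> : m%:Z - n%:Z = Negz (n - m).-1 by rewrite NegzE; lia.
rewrite /gexpz prednK ?subn_gt0 // -{2}(subnK (ltnW lt_mn)) gexpnD ginvM.
by rewrite gmulA gmulgV gmul1l.
Qed.

Lemma gexpzD x z1 z2 : gexpz x (z1 + z2) = gmul (gexpz x z1) (gexpz x z2).
Proof.
have int_subn (z : int) : exists m n : nat, z = m%:Z - n%:Z.
  by case: z => n; [exists n, 0%N | exists 0%N, n.+1]; rewrite ?NegzE; lia.
have [m1 [n1 ->]] := int_subn z1; have [m2 [n2 ->]] := int_subn z2.
have -> : m1%:Z - n1%:Z + (m2%:Z - n2%:Z) = (m1 + m2)%N%:Z - (n1 + n2)%N%:Z by lia.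
rewrite !gexpz_subn !gexpnD (gexpn_comm x n1) ginvM -!gmulA; congr gmul.
by rewrite !gmulA (commuteV (gexpn_comm x m2 n1)).
Qed.

Lemma gexpz1 x : gexpz x 1 = x.
Proof. exact: gmulg1. Qed.

Lemma central_gexpz x z : central x -> central (gexpz x z).
Proof.
have central_gexpn n : central x -> central (gexpn x n).
  by move=> Hx; elim: n => [|n IH]; [exact: central1 | exact: centralM].
by case: z => n Hx; [|apply: centralV]; apply: central_gexpn.
Qed.

End GroupTheory.

Section Homomorphisms.
Variables (G H : group) (f : G -> H).
Hypothesis f_hom : is_hom f.

Lemma hom1 : f (gone G) = gone H.
Proof. by apply: (@gmulI _ (f (gone G))); rewrite -f_hom gmul1l gmulg1. Qed.

Lemma homV x : f (ginv x) = ginv (f x).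
Proof. by apply/esym/ginv_unique; rewrite -f_hom gmulgV hom1. Qed.

Lemma hom_gexpz x z : f (gexpz x z) = gexpz (f x) z.
Proof.
have hom_gexpn n : f (gexpn x n) = gexpn (f x) n.
  by elim: n => [|n IH]; [exact: hom1 | rewrite /= f_hom IH].
case: z => n; first exact: hom_gexpn.
change (f (ginv (gexpn x n.+1)) = ginv (gexpn (f x) n.+1)).
by rewrite homV hom_gexpn.
Qed.

End Homomorphisms.

Definition zvec_group (V : finType) : group :=
  @Defs.Group {ffun V -> int} (fun x y => x + y) 0 (fun x => - x)
    (@addrA _) (@add0r _) (@addNr _).

Lemma zvec_mulE (V : finType) (x y : zvec_group V) v :
  (gmul x y : {ffun V -> int}) v = x v + y v.
Proof. exact: ffunE. Qed.

Lemma zvec_gexpzE (V : finType) (x : zvec_group V) z v :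
  (gexpz x z : {ffun V -> int}) v = x v * z.
Proof.
have zvec_gexpnE n : (gexpn x n : {ffun V -> int}) v = x v *+ n.
  by elim: n => [|n IH]; rewrite /= ffunE ?IH ?mulrS.
case: z => n.
  change ((gexpn x n : {ffun V -> int}) v = x v * n%:Z).
  by rewrite zvec_gexpnE -mulr_natr natz.
change ((- gexpn x n.+1 : {ffun V -> int}) v = x v * Negz n).
by rewrite ffunE zvec_gexpnE NegzE mulrN -mulr_natr natz.
Qed.

Section RightAngledArtinGroup.
Variables (V : finType) (E : rel V) (G : group) (iota : V -> G).
Hypothesis raagG : is_raag E iota.
Local Notation S := (social_set E).

Lemma raag_hom_ext (H : group) (f g : G -> H) : is_hom f -> is_hom g ->
  (forall v, f (iota v) = g (iota v)) -> f = g.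
Proof.
move=> f_hom g_hom fg_gen; have [iota_comm univ] := raagG.
have f_comm x y : E x y ->
    gmul (f (iota x)) (f (iota y)) = gmul (f (iota y)) (f (iota x)).
  by move=> Exy; rewrite -!f_hom iota_comm.
have [phi [_ _ phi_uniq]] := univ H (fun v => f (iota v)) f_comm.
apply: functional_extensionality => x.
by rewrite (phi_uniq f) // (phi_uniq g) // => v; rewrite fg_gen.
Qed.

(* Conjugation by a social generator fixes every generator, hence is the identity. *)
Lemma social_central s : s \in S -> central (iota s).
Proof.
move=> Ss y.
pose conj x := gmul (gmul (iota s) x) (ginv (iota s)).
have conj_hom : is_hom conj.
  move=> x z; rewrite /conj.
  by rewrite !gmulA -(gmulA _ (ginv (iota s)) (iota s)) gmulVl gmulg1.
have conj_id : conj = id.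
  apply: raag_hom_ext => // v; rewrite /conj.
  have [-> | neq_vs] := eqVneq v s; first by rewrite -gmulA gmulgV gmulg1.
  move: Ss; rewrite inE => /forallP /(_ v); rewrite neq_vs => Esv.
  by rewrite (raagG.1 _ _ Esv) -gmulA gmulgV gmulg1.
have conj_y : gmul (gmul (iota s) y) (ginv (iota s)) = y.
  exact: (congr1 (fun h : G -> G => h y) conj_id).
by rewrite -{2}conj_y -gmulA gmulVl gmulg1.
Qed.

Definition social_prod (l : seq V) (c : V -> int) : G :=
  \big[@gmul G/gone G]_(s <- l) gexpz (iota s) (c s).

Lemma social_prod_central l c : {subset l <= S} -> central (social_prod l c).
Proof.
rewrite /social_prod; elim: l => [|s l' IH] sub_l; rewrite ?big_nil ?big_cons.
  exact: central1.
apply: centralM; first by apply/central_gexpz/social_central/sub_l; rewrite inE eqxx.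
by apply: IH => x lx; apply: sub_l; rewrite inE lx orbT.
Qed.

Lemma social_prodD l c d : {subset l <= S} ->
  gmul (social_prod l c) (social_prod l d) = social_prod l (fun s => c s + d s).
Proof.
rewrite /social_prod; elim: l => [|s l' IH] sub_l; rewrite ?big_nil ?big_cons.
  exact: gmul1l.
have sub_l' : {subset l' <= S} by move=> x lx; apply: sub_l; rewrite inE lx orbT.
rewrite -IH // gexpzD -!gmulA; congr gmul.
by rewrite !gmulA (social_prod_central _ sub_l').
Qed.

Lemma eq_social_prod l c d : {in l, c =1 d} -> social_prod l c = social_prod l d.
Proof. by move=> eq_cd; apply: eq_big_seq => s ls; rewrite eq_cd. Qed.

Lemma social_prod_hom (f : G -> G) l c : is_hom f ->
  {in l, forall s, f (iota s) = iota s} -> f (social_prod l c) = social_prod l c.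
Proof.
move=> f_hom; rewrite /social_prod; elim: l => [|s l IH] fix_l.
  by rewrite !big_nil (hom1 f_hom).
rewrite !big_cons f_hom (hom_gexpz f_hom) fix_l ?inE ?eqxx // IH // => x lx.
by apply: fix_l; rewrite inE lx orbT.
Qed.

Lemma social_prod0 l c : {in l, forall s, c s = 0} -> social_prod l c = gone G.
Proof.
rewrite /social_prod; elim: l => [|s l IH] c0_l; rewrite ?big_nil // big_cons.
rewrite c0_l ?inE ?eqxx // IH ?gmul1l // => x lx.
by apply: c0_l; rewrite inE lx orbT.
Qed.

Lemma social_prod_delta l s : uniq l -> s \in l ->
  social_prod l (fun s' => if s' == s then 1 else 0) = iota s.
Proof.
rewrite /social_prod; elim: l => [|s0 l IH] //= /andP [s0_l uniq_l].
rewrite inE big_cons; have [<- _ | neq_s0s /= l_s] := eqVneq s0 s.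
  rewrite -/(social_prod _ _) social_prod0 ?gmulg1 ?gexpz1 // => x lx.
  by case: eqP lx => // ->; rewrite (negbTE s0_l).
by rewrite gmul1l IH.
Qed.

Definition transvection_image (c : V -> V -> int) v :=
  if v \in S then iota v else gmul (iota v) (social_prod (enum S) (fun s => c s v)).

Definition is_transvection c (f : G -> G) :=
  is_hom f /\ forall v, f (iota v) = transvection_image c v.

Lemma enum_social : {subset enum S <= S}.
Proof. by move=> x; rewrite mem_enum. Qed.

Lemma transvection_exists c : exists f, is_transvection c f.
Proof.
have image_central v :
    exists2 z, central z & transvection_image c v = gmul (iota v) z.
  rewrite /transvection_image; case: ifP => _.
    by exists (gone G); [exact: central1 | rewrite gmulg1].
  by exists (social_prod (enum S) (c^~ v)); first exact: social_prod_central enum_social.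
have image_comm x y : E x y -> gmul (transvection_image c x) (transvection_image c y)
    = gmul (transvection_image c y) (transvection_image c x).
  move=> Exy; have [zx zx_central ->] := image_central x.
  have [zy zy_central ->] := image_central y.
  by apply: commute_mul_central => //; apply: raagG.1.
have [f [f_hom f_gen _]] := raagG.2 G _ image_comm.
by exists f.
Qed.

Lemma transvection_uniq c f g : is_transvection c f -> is_transvection c g -> f = g.
Proof.
by move=> [f_hom f_gen] [g_hom g_gen]; apply: raag_hom_ext => // v; rewrite f_gen g_gen.
Qed.

Lemma transvection_ext c d f :
  (forall s a, s \in S -> a \notin S -> c s a = d s a) ->
  is_transvection c f -> is_transvection d f.
Proof.
move=> eq_cd [f_hom f_gen]; split => // v; rewrite f_gen /transvection_image.
case: ifP => // v_nonsocial; congr gmul; apply: eq_social_prod => s Ss.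
by rewrite eq_cd ?v_nonsocial // -mem_enum.
Qed.

Lemma transvection_id : is_transvection (fun _ _ => 0) id.
Proof.
split=> // v; rewrite /transvection_image; case: ifP => // _.
by rewrite social_prod0 ?gmulg1.
Qed.

Lemma transvection_comp c d f g : is_transvection c f -> is_transvection d g ->
  is_transvection (fun s a => c s a + d s a) (f \o g).
Proof.
move=> [f_hom f_gen] [g_hom g_gen]; split=> [x y | v] /=; first by rewrite g_hom f_hom.
rewrite g_gen /transvection_image; case: ifP => v_social.
  by rewrite f_gen /transvection_image v_social.
rewrite f_hom f_gen /transvection_image v_social (social_prod_hom _ f_hom).
  by rewrite -gmulA social_prodD //; exact: enum_social.
by move=> s; rewrite mem_enum => Ss; rewrite f_gen /transvection_image Ss.
Qed.

Lemma transvection_inverse c t : is_transvection c t ->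
  exists u, [/\ is_transvection (fun s a => - c s a) u, cancel t u & cancel u t].
Proof.
move=> t_tr; have [u u_tr] := transvection_exists (fun s a => - c s a).
have comp_id d f g : is_transvection d f -> is_transvection (fun s a => - d s a) g ->
    cancel g f.
  move=> f_tr g_tr x; have fg_id : f \o g = id.
    apply: transvection_uniq transvection_id.
    by apply: transvection_ext (transvection_comp f_tr g_tr) => s a _ _; rewrite subrr.
  exact: (congr1 (fun h : G -> G => h x) fg_id).
exists u; split => //; last exact: comp_id t_tr u_tr.
apply: comp_id u_tr _.
by apply: transvection_ext t_tr => s a _ _; rewrite opprK.
Qed.

Local Notation in_lat := (in_lat_subgroup E iota).

Definition unit_coef (p : V * V) : V -> V -> int :=
  fun s a => if (s, a) == p then 1 else 0.

Lemma transvection_image_unit s a v : s \in S -> a \notin S ->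
  transvection_image (unit_coef (s, a)) v =
  if v == a then gmul (iota a) (iota s) else iota v.
Proof.
move=> Ss Sa; rewrite /transvection_image; case: ifPn => [Sv | Sv].
  by case: eqP Sv => // ->; rewrite (negbTE Sa).
have [-> | neq_va] := eqVneq v a.
  rewrite (@eq_social_prod _ _ (fun s' => if s' == s then 1 else 0)).
    by rewrite social_prod_delta ?enum_uniq ?mem_enum.
  by move=> s' _; rewrite /unit_coef xpair_eqE eqxx andbT.
rewrite social_prod0 ?gmulg1 // => s' _.
by rewrite /unit_coef xpair_eqE (negbTE neq_va) andbF.
Qed.

Lemma lateral_transvectionP s a t : s \in S -> a \notin S ->
  lateral_transvection iota s a t <-> is_transvection (unit_coef (s, a)) t.
Proof.
move=> Ss Sa; split.
  move=> [[t_hom _] t_a t_v]; split=> // v; rewrite transvection_image_unit //.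
  by have [-> | /t_v] := eqVneq v a.
move=> t_tr; have [u [_ tK uK]] := transvection_inverse t_tr.
split; first by split; [exact: t_tr.1 | exists u].
  by rewrite t_tr.2 transvection_image_unit // eqxx.
by move=> v /negbTE neq_va; rewrite t_tr.2 transvection_image_unit // neq_va.
Qed.

Lemma in_lat_comp f g : in_lat f -> in_lat g -> in_lat (f \o g).
Proof.
move=> Lf Lg; elim: Lf => [|f' t _ IH gen_t | f' t u _ IH gen_t tK uK] //.
  exact: lat_gen IH gen_t.
exact: lat_geninv IH gen_t tK uK.
Qed.

Lemma in_lat_transvection f : in_lat f -> exists c, is_transvection c f.
Proof.
have gen_tr t : is_lat_gen E iota t -> exists c, is_transvection c t.
  move=> [s [a [Ss Sa]]] /(lateral_transvectionP _ Ss Sa) t_tr.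
  by exists (unit_coef (s, a)).
elim=> [|h t _ [c h_tr] /gen_tr [d t_tr] | h t u _ [c h_tr] /gen_tr [d t_tr] tK uK].
- by exists (fun _ _ => 0); exact: transvection_id.
- by exists (fun s a => d s a + c s a); exact: transvection_comp t_tr h_tr.
- have [u' [u'_tr _ u'K]] := transvection_inverse t_tr.
  have -> : u = u'.
    by apply: functional_extensionality => x; rewrite -{1}(u'K x) tK.
  by exists (fun s a => - d s a + c s a); exact: transvection_comp u'_tr h_tr.
Qed.

Definition realizable c := exists2 f, in_lat f & is_transvection c f.

Lemma realizable_ext c d : (forall s a, s \in S -> a \notin S -> c s a = d s a) ->
  realizable c -> realizable d.
Proof. by move=> eq_cd [f Lf f_tr]; exists f => //; apply: transvection_ext f_tr. Qed.

Lemma realizable0 : realizable (fun _ _ => 0).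
Proof. by exists id; [exact: lat_id | exact: transvection_id]. Qed.

Lemma realizableD c d : realizable c -> realizable d ->
  realizable (fun s a => c s a + d s a).
Proof.
move=> [f Lf f_tr] [g Lg g_tr]; exists (f \o g); first exact: in_lat_comp.
exact: transvection_comp f_tr g_tr.
Qed.

Lemma realizable_unit s a : s \in S -> a \notin S ->
  realizable (unit_coef (s, a)) /\ realizable (fun s' a' => - unit_coef (s, a) s' a').
Proof.
move=> Ss Sa; have [t t_tr] := transvection_exists (unit_coef (s, a)).
have [u [u_tr tK uK]] := transvection_inverse t_tr.
have gen_t : is_lat_gen E iota t by exists s, a; split; last exact/lateral_transvectionP.
split; [exists t | exists u] => //.
  exact: (lat_gen (lat_id E iota) gen_t).
exact: (lat_geninv (lat_id E iota) gen_t tK uK).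
Qed.

Lemma realizable_mulz c z : realizable c -> realizable (fun s a => - c s a) ->
  realizable (fun s a => z * c s a).
Proof.
have realizable_muln d n : realizable d -> realizable (fun s a => n%:Z * d s a).
  move=> rd; elim: n => [|n IH].
    by apply: realizable_ext realizable0 => s a _ _; rewrite mul0r.
  by apply: realizable_ext (realizableD rd IH) => s a _ _; rewrite intS mulrDl mul1r.
case: z => n rc rNc; first exact: realizable_muln.
by apply: realizable_ext (realizable_muln _ n.+1 rNc) => s a _ _; rewrite NegzE mulrN mulNr.
Qed.

Lemma realizable_all c : realizable c.
Proof.
suff realizable_supp (l : seq (V * V)) : {subset l <= setX S (~: S)} -> forall c,
    (forall s a, s \in S -> a \notin S -> (s, a) \notin l -> c s a = 0) -> realizable c.
  by apply: (realizable_supp (enum (setX S (~: S)))) => [p | s a Ss Sa];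
    rewrite mem_enum // in_setX in_setC Ss Sa.
elim: l => [|[s0 a0] l IH] l_pairs {}c c_supp.
  by apply: realizable_ext realizable0 => s a Ss Sa; rewrite c_supp.
have /setXP [Ss0] : (s0, a0) \in setX S (~: S) by rewrite l_pairs ?inE ?eqxx.
rewrite inE => Sa0.
pose c' s a := if (s, a) == (s0, a0) then 0 else c s a.
have rc' : realizable c'.
  apply: IH => [p lp | s a Ss Sa l_sa]; first by rewrite l_pairs // inE lp orbT.
  rewrite /c'; case: eqP => // /eqP neq; apply: c_supp => //.
  by rewrite inE negb_or neq.
have [ru rNu] := realizable_unit Ss0 Sa0.
apply: realizable_ext (realizableD (realizable_mulz (c s0 a0) ru rNu) rc') => s a _ _.
rewrite /c' /unit_coef; case: eqP => [[-> ->] | _]; first by rewrite mulr1 addr0.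
by rewrite mulr0 add0r.
Qed.

Lemma raag_abelianization : exists2 eps : G -> zvec_group V,
  is_hom eps & forall v, eps (iota v) = [ffun u => (u == v)%:R].
Proof.
have [eps [eps_hom eps_gen _]] :=
  raagG.2 (zvec_group V) (fun v => [ffun u => (u == v)%:R]) (fun x y _ => addrC _ _).
by exists eps.
Qed.

Variable eps : G -> zvec_group V.
Hypotheses (eps_hom : is_hom eps)
  (eps_gen : forall v, eps (iota v) = [ffun u => (u == v)%:R]).

Lemma eps_social_prod l c u : uniq l ->
  (eps (social_prod l c) : {ffun V -> int}) u = if u \in l then c u else 0.
Proof.
rewrite /social_prod; elim: l => [|s l IH]; first by rewrite big_nil (hom1 eps_hom) ffunE.
rewrite big_cons inE => /andP [s_l uniq_l].
rewrite eps_hom zvec_mulE (hom_gexpz eps_hom) zvec_gexpzE eps_gen ffunE IH //.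
have [-> | neq_us] /= := eqVneq u s; first by rewrite (negbTE s_l) mul1r addr0.
by rewrite mul0r add0r.
Qed.

Definition coef_of (f : G -> G) s a : int := (eps (f (iota a)) : {ffun V -> int}) s.

Lemma coef_of_transvection c f s a : is_transvection c f -> s \in S -> a \notin S ->
  coef_of f s a = c s a.
Proof.
move=> [_ f_gen] Ss Sa; rewrite /coef_of f_gen /transvection_image (negbTE Sa).
rewrite eps_hom zvec_mulE eps_gen ffunE eps_social_prod ?enum_uniq // mem_enum Ss.
by have [eq_sa | _] := eqVneq s a; rewrite ?add0r //; rewrite -eq_sa Ss in Sa.
Qed.

End RightAngledArtinGroup.

Section PairEnumeration.
Variables (T : finType) (A B : {set T}).

Definition pair_enum (i : 'I_(#|A| * #|B|)) : T * T :=
  enum_val (A := setX A B) (cast_ord (esym (cardsX A B)) i).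

Lemma pair_enumP i : (pair_enum i).1 \in A /\ (pair_enum i).2 \in B.
Proof. by apply/andP; rewrite -in_setX -surjective_pairing enum_valP. Qed.

Lemma pair_enum_inj : injective pair_enum.
Proof. by move=> i j /enum_val_inj /cast_ord_inj. Qed.

Lemma pair_enum_onto p : p \in setX A B -> exists i, pair_enum i = p.
Proof.
move=> ABp; exists (cast_ord (cardsX A B) (enum_rank_in ABp p)).
by rewrite /pair_enum cast_ordK enum_rankK_in.
Qed.

End PairEnumeration.

Theorem mainTheorem3 (V : finType) (E : rel V) (G : group) (iota : V -> G) :
  simple_graph E ->
  is_raag E iota ->
  nontrivial_centre G ->
  let k := #|social_set E| in
  let d := #|~: social_set E| in
  exists Phi : (G -> G) -> {ffun 'I_(k * d) -> int},
    [/\ (forall f g, in_lat_subgroup E iota f -> in_lat_subgroup E iota g ->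
           Phi (f \o g) = Phi f + Phi g),
        (forall f g, in_lat_subgroup E iota f -> in_lat_subgroup E iota g ->
           Phi f = Phi g -> f = g) &
        (forall z, exists f, in_lat_subgroup E iota f /\ Phi f = z)].
Proof.
move=> _ raagG _ k d.
have [eps eps_hom eps_gen] := raag_abelianization raagG.
pose p := @pair_enum _ (social_set E) (~: social_set E).
have p_pair i : (p i).1 \in social_set E /\ (p i).2 \notin social_set E.
  by have [? ?] := pair_enumP i; rewrite -in_setC.
have coefE c f : is_transvection E iota c f ->
    forall i, coef_of iota eps f (p i).1 (p i).2 = c (p i).1 (p i).2.
  by move=> f_tr i; have [Ss Sa] := p_pair i; exact: coef_of_transvection f_tr Ss Sa.
exists (fun f => [ffun i => coef_of iota eps f (p i).1 (p i).2]); split.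
- move=> f g /(in_lat_transvection raagG) [c f_tr] /(in_lat_transvection raagG) [c' g_tr].
  apply/ffunP => i; rewrite !ffunE (coefE _ _ f_tr) (coefE _ _ g_tr).
  by rewrite (coefE _ _ (transvection_comp raagG f_tr g_tr)).
- move=> f g /(in_lat_transvection raagG) [c f_tr] /(in_lat_transvection raagG) [c' g_tr].
  move=> /ffunP eq_fg; apply: (transvection_uniq raagG f_tr).
  apply: (transvection_ext _ g_tr) => s a Ss Sa.
  have [i pi] : exists i, p i = (s, a) by apply: pair_enum_onto; rewrite in_setX in_setC Ss Sa.
  by have := eq_fg i; rewrite !ffunE (coefE _ _ f_tr) (coefE _ _ g_tr) pi.
- move=> z; pose c s a := if [pick i | p i == (s, a)] is Some i then z i else 0.
  have [f Lf f_tr] := realizable_all raagG c.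
  exists f; split=> //; apply/ffunP => i; rewrite ffunE (coefE _ _ f_tr) /c -surjective_pairing.
  by case: pickP => [j /eqP /pair_enum_inj -> | /(_ i)]; rewrite ?eqxx.
Qed.
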